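(* Let $t$ be an integer with $m=2t+1\geq 11$ and $n=2^m+1$, and let $x$ be an odd integer. Then: (1) if $1\leq x\leq 2^{t+1}-3$, then $x$ is a coset leader; (2) if $2^{t+1}+3\leq x\leq 2^{t+1}+2^{t}-3$, then $x$ is a coset leader; (3) if $2^{t+1}+2^{t}+3\leq x\leq 2^{t+2}-9$, then $x$ is a coset leader; (4) if $x\in\{2^{t+1}-1,\ 2^{t+1}+1,\ 2^{t+1}+2^{t}-1,\ 2^{t+1}+2^{t}+1\}$ or $2^{t+2}-7\leq x\leq 2^{t+2}+7$, then $x$ is not a coset leader.
   Context: For $n=2^m+1$ and an integer $x$, the 2-cyclotomic coset of $x$ modulo $n$ is $C_x=\{x\cdot 2^{j} \bmod n : j\geq 0\}\subseteq\{0,1,\dots,n-1\}$, and $|C_x|$ denotes its cardinality. For $0\leq x\leq n-1$, ''$x$ is a coset leader'' means that $x$ is the smallest element of $C_x$. *)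

From mathcomp Require Import all_boot.
Set Implicit Arguments. Unset Strict Implicit. Unset Printing Implicit Defensive.

Definition in_coset (n x y : nat) : Prop := exists j : nat, y = (x * 2 ^ j) %% n.

Definition coset_leader (n x : nat) : Prop :=
  x < n /\ in_coset n x x /\ forall y, in_coset n x y -> x <= y.

From mathcomp Require Import all_boot zify.

(* Since 2^m = -1 (mod n), the coset of x consists of the residues r_j of
   x * 2^j and their negatives n - r_j for j < m, so x is a coset leader as
   soon as x <= r_j <= n - x for all j < m.  Write n - 1 = 2^m = P * Q with
   Q = 2^j; splitting x = hi * P + lo gives x * Q = lo * Q - hi (mod n), and
   this residue is computed directly: with hi <= 3 for j <= t + 1, and with
   P <= 2^(t-1) small for j >= t + 2.  The listed non-leaders are refuted by
   an explicit multiple x * 2^k whose residue, or its negative, is below x. *)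

Lemma not_coset_leader n x k q r :
  x * 2 ^ k = q * n + r -> r < x -> ~ coset_leader n x.
Proof.
move=> x_eq r_lt [x_lt_n [_ x_min]].
suff : x <= r by lia.
by apply: x_min; exists k; rewrite x_eq modnMDl modn_small //; lia.
Qed.

Section FermatModulus.

Variable m : nat.
Local Notation n := (2 ^ m + 1).

Lemma modn_mul_expm a : 0 < a %% n -> a * 2 ^ m %% n = n - a %% n.
Proof.
move=> r_gt0; have r_lt : a %% n < n by rewrite ltn_pmod ?addn1.
have {1}-> : a = a %/ n * n + a %% n := divn_eq a n.
have -> : (a %/ n * n + a %% n) * 2 ^ m
          = (a %/ n * 2 ^ m + (a %% n).-1) * n + (n - a %% n) by nia.
by rewrite modnMDl modn_small //; lia.
Qed.

Lemma expn_mod_period : 2 ^ (2 * m) %% n = 1.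
Proof.
have lt_n : 2 ^ m < n by rewrite addn1.
by rewrite mul2n -addnn expnD modn_mul_expm modn_small ?expn_gt0 //; lia.
Qed.

Lemma coset_leader_of_residues x : 0 < m -> 0 < x ->
  (forall j, j < m -> x <= x * 2 ^ j %% n <= n - x) -> coset_leader n x.
Proof.
move=> m_gt0 x_gt0 balanced.
have /andP[x_le x_le'] := balanced 0 m_gt0; rewrite muln1 in x_le x_le'.
have x_lt_n : x < n by lia.
split=> //; split; first by exists 0; rewrite muln1 modn_small.
move=> _ [j ->]; rewrite (divn_eq j (2 * m)) addnC expnD mulnA -modnMmr.
have n_gt1 : 1 < n by rewrite addn1 ltnS expn_gt0.
rewrite [_ * (2 * m)]mulnC expnM -modnXm expn_mod_period exp1n (modn_small n_gt1) muln1.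
have : j %% (2 * m) < 2 * m by rewrite ltn_pmod ?muln_gt0.
move: (j %% _) => i i_lt; case: (ltnP i m) => [i_lt_m|m_le_i].
  by case/andP: (balanced i i_lt_m).
have /andP[r_ge r_le] := balanced (i - m) ltac:(lia).
rewrite -(subnK m_le_i) expnD mulnA modn_mul_expm; lia.
Qed.

Lemma not_coset_leader_opp x k q r :
  x * 2 ^ k = q * n + r -> 0 < r < n -> n - r < x -> ~ coset_leader n x.
Proof.
move=> x_eq /andP[r_gt0 r_lt] r_opp.
have opp_eq : x * 2 ^ (k + m) %% n = n - r.
  by rewrite expnD mulnA modn_mul_expm x_eq modnMDl modn_small.
by apply: (@not_coset_leader n x (k + m) _ _ (divn_eq _ n)); rewrite opp_eq.
Qed.

End FermatModulus.

Lemma residue_balanced P Q x hi lo : x = hi * P + lo ->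
  x + hi <= lo * Q -> lo * Q + x <= P * Q + 1 + hi ->
  x <= x * Q %% (P * Q + 1) <= P * Q + 1 - x.
Proof.
move=> x_eq lo_ge lo_le.
have -> : x * Q = hi * (P * Q + 1) + (lo * Q - hi) by rewrite x_eq mulnDl; nia.
by rewrite modnMDl modn_small; nia.
Qed.

Lemma residue_balanced_ndvd P Q x : 0 < P -> ~~ (P %| x) -> x * P.+1 <= P * Q ->
  x <= x * Q %% (P * Q + 1) <= P * Q + 1 - x.
Proof.
move=> P_gt0 P_ndvd_x x_small.
have lo_gt0 : 0 < x %% P by rewrite lt0n.
have lo_lt : x %% P < P by rewrite ltn_pmod.
have hi_le : x %/ P * P <= x by rewrite leq_divM.
have hi_x_le : x %/ P + x <= Q.
  by rewrite -(leq_pmul2r P_gt0); nia.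
apply: (@residue_balanced P Q x (x %/ P) (x %% P) (divn_eq x P)); nia.
Qed.

Section Residues.

Variables a x : nat.
Hypothesis a_even : ~~ odd a.
Hypothesis a_ge32 : 32 <= a.
Hypothesis x_odd : odd x.
Hypothesis x_le : x <= 4 * a - 9.
Hypothesis x_notin : x \notin [:: 2 * a - 1; 2 * a + 1; 3 * a - 1; 3 * a + 1].
Local Notation n := (2 * a * a + 1).

Let x_gt0 : 0 < x := odd_gt0 x_odd.
Let x_ne : [/\ x != 2 * a - 1, x != 2 * a + 1, x != 3 * a - 1 & x != 3 * a + 1].
Proof. by move: x_notin; rewrite !inE !negb_or => /and4P. Qed.

(* Parity facts in a form that lia can use. *)
Let x_half : x./2.*2 = x.-1 := odd_halfK x_odd.
Let a_half : a./2.*2 = a := even_halfK a_even.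

Lemma residue_mul_small P Q : P * Q = 2 * a * a -> 0 < Q -> 2 * Q <= a ->
  x <= x * Q %% n <= n - x.
Proof.
move=> PQ Q_gt0 Q_le; rewrite -PQ.
apply: (@residue_balanced P Q x 0 x) => //; nia.
Qed.

Lemma residue_mul_a : x <= x * a %% n <= n - x.
Proof.
have [? ? _ _] := x_ne.
have [x_lt | x_gt] := ltnP x (2 * a).
  apply: (@residue_balanced (2 * a) a x 0 x) => //; nia.
apply: (@residue_balanced (2 * a) a x 1 (x - 2 * a)); nia.
Qed.

Lemma residue_mul_2a : x <= x * (2 * a) %% n <= n - x.
Proof.
have [? ? ? ?] := x_ne; rewrite [2 * a * a]mulnC.
have [x_lt | x_gt] := ltnP x a.
  apply: (@residue_balanced a (2 * a) x 0 x) => //; nia.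
have [x_lt2 | x_gt2] := ltnP x (2 * a).
  apply: (@residue_balanced a (2 * a) x 1 (x - a)); nia.
have [x_lt3 | x_gt3] := ltnP x (3 * a).
  apply: (@residue_balanced a (2 * a) x 2 (x - 2 * a)); nia.
apply: (@residue_balanced a (2 * a) x 3 (x - 3 * a)); nia.
Qed.

Lemma residue_mul_large P Q : P * Q = 2 * a * a -> 0 < P -> ~~ odd P -> 2 * P <= a ->
  x <= x * Q %% n <= n - x.
Proof.
move=> PQ P_gt0 P_even P_le; rewrite -PQ; apply: residue_balanced_ndvd => //.
  by apply: contra P_even => /dvdn_odd; apply.
nia.
Qed.

End Residues.

Lemma expn_double_add1 t : 2 ^ (2 * t + 1) = 2 * 2 ^ t * 2 ^ t.
Proof. by rewrite -mulnA -expnD addnn -mul2n addn1 expnS. Qed.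

Section OddExponent.

Variable t : nat.
Hypothesis t_ge5 : 5 <= t.
Local Notation a := (2 ^ t).
Local Notation n := (2 ^ (2 * t + 1) + 1).

Lemma expn_ge32 : 32 <= a.
Proof. by rewrite -[32]/(2 ^ 5) leq_pexp2l. Qed.

Lemma coset_leader_below_4a x : odd x -> x <= 4 * a - 9 ->
  x \notin [:: 2 ^ t.+1 - 1; 2 ^ t.+1 + 1; 2 ^ t.+1 + a - 1; 2 ^ t.+1 + a + 1] ->
  coset_leader n x.
Proof.
move=> x_odd x_le; rewrite expnS => x_notin.
have {}x_notin : x \notin [:: 2 * a - 1; 2 * a + 1; 3 * a - 1; 3 * a + 1].
  by move: x_notin; rewrite !inE; lia.
have a_even : ~~ odd a by rewrite oddX orbF -lt0n; lia.
have a_ge32 := expn_ge32.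
apply: coset_leader_of_residues; [lia | exact: odd_gt0 | move=> j j_lt].
have PQ : 2 ^ (2 * t + 1 - j) * 2 ^ j = 2 * a * a.
  by rewrite -expnD subnK ?expn_double_add1 // ltnW.
rewrite expn_double_add1.
have [j_lt_t | j_ge_t] := ltnP j t.
  apply: residue_mul_small PQ _ _ => //; first exact: expn_gt0.
  by rewrite -expnS leq_pexp2l.
have [-> | j_ne_t] := eqVneq j t; first exact: residue_mul_a.
have [-> | j_ne_tS] := eqVneq j t.+1; first by rewrite expnS; apply: residue_mul_2a.
apply: residue_mul_large PQ _ _ _ => //; first exact: expn_gt0.
  by rewrite oddX orbF -lt0n; lia.
by rewrite -expnS leq_pexp2l //; lia.
Qed.

Lemma not_coset_leader_exceptional x :
  x \in [:: 2 ^ t.+1 - 1; 2 ^ t.+1 + 1; 2 ^ t.+1 + a - 1; 2 ^ t.+1 + a + 1] ->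
  ~ coset_leader n x.
Proof.
have a_ge32 := expn_ge32.
rewrite expnS !inE => /or4P[] /eqP->.
- apply: (@not_coset_leader_opp _ _ t 0 ((2 * a - 1) * a));
    rewrite ?expn_double_add1; nia.
- apply: (@not_coset_leader _ _ t 1 (a - 1)); rewrite ?expn_double_add1; nia.
- apply: (@not_coset_leader_opp _ _ t.+1 2 (2 * a * a - 2 * a - 2));
    rewrite ?expnS ?expn_double_add1; nia.
- apply: (@not_coset_leader _ _ t.+1 3 (2 * a - 3)); rewrite ?expnS ?expn_double_add1; nia.
Qed.

Lemma not_coset_leader_near_4a x : odd x -> 2 ^ t.+2 - 7 <= x <= 2 ^ t.+2 + 7 ->
  ~ coset_leader n x.
Proof.
have a_ge32 := expn_ge32.
have a_eq : a = 2 * 2 ^ t.-1 by rewrite -expnS prednK //; lia.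
move=> x_odd; rewrite !expnS => /andP[x_ge x_le].
have x_ne : x != 4 * a by apply: contraTneq x_odd => ->; rewrite oddM.
have [x_lt | x_gt] := ltnP x (4 * a).
  apply: (@not_coset_leader_opp _ _ t.-1 0 (x * 2 ^ t.-1));
    rewrite ?expn_double_add1; nia.
apply: (@not_coset_leader _ _ t.-1 1 (x * 2 ^ t.-1 - 2 * a * a - 1));
  rewrite ?expn_double_add1; nia.
Qed.

End OddExponent.

Theorem theorem3p1 (t : nat) (hm : 11 <= 2 * t + 1) (x : nat) (hx : odd x) :
  let m := 2 * t + 1 in
  let n := 2 ^ m + 1 in
  ((1 <= x <= 2 ^ t.+1 - 3) -> coset_leader n x) /\
  ((2 ^ t.+1 + 3 <= x <= 2 ^ t.+1 + 2 ^ t - 3) -> coset_leader n x) /\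
  ((2 ^ t.+1 + 2 ^ t + 3 <= x <= 2 ^ t.+2 - 9) -> coset_leader n x) /\
  ((x \in [:: 2 ^ t.+1 - 1; 2 ^ t.+1 + 1; 2 ^ t.+1 + 2 ^ t - 1; 2 ^ t.+1 + 2 ^ t + 1]) ||
   (2 ^ t.+2 - 7 <= x <= 2 ^ t.+2 + 7) -> ~ coset_leader n x).
Proof.
move=> m n; have t_ge5 : 5 <= t by lia.
have a_ge32 := expn_ge32 t t_ge5.
have leader_below := coset_leader_below_4a t t_ge5 x hx.
split; [|split; [|split]]; last first.
  case/orP=> [x_exceptional | x_near].
    exact: not_coset_leader_exceptional t t_ge5 x x_exceptional.
  exact: not_coset_leader_near_4a t t_ge5 x hx x_near.
all: move=> x_range; apply: leader_below; move: x_range; rewrite ?inE !expnS; lia.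
Qed.
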